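(* Let $k\ge 2$, let $G$ be a finite simple graph with a closed neighborhood balanced $k$-coloring $c$, and let $z\in V(G)$ with $c(z)=k$. Let $G'$ be obtained from $G$ by a $(3k-2)$-vertex addition at $z$, with the coloring $c'$ extending $c$ described below. Then $c'$ is a closed neighborhood balanced $k$-coloring of $G'$, and compared with $c$ on $G$, $c'$ has exactly one additional vertex of color $k$ and exactly three additional vertices of each color $1,\dots,k-1$.
   Context: For a vertex $v$, $N[v]=\{v\}\cup\{u : uv\in E(G)\}$. A closed neighborhood balanced $k$-coloring of $G$ is a map $c: V(G)\to\{1,\dots,k\}$ such that for every vertex $v$ the numbers $|\{u\in N[v] : c(u)=i\}|$, $i=1,\dots,k$, are all equal. A $(3k-2)$-vertex addition at $z$ (where $c(z)=k$): add new vertices $u_1,\dots,u_k$, each adjacent to $z$; for each $1\le i\le k-1$, $u_i$ is adjacent to $u_{i+1},\dots,u_{k-1}$; add new vertices $v_1,\dots,v_{k-1}$ and $v_1',\dots,v_{k-1}'$, all adjacent to $u_k$; for each $1\le i\le k-2$, $v_i$ is adjacent to $v_{i+1},\dots,v_{k-1}$ and $v_i'$ is adjacent to $v_{i+1}',\dots,v_{k-1}'$; there are no other new edges. The coloring $c'$ agrees with $c$ on $V(G)$, gives $u_i$ color $i$ ($1\le i\le k$), and gives both $v_i$ and $v_i'$ color $i$ ($1\le i\le k-1$). *)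

From mathcomp Require Import all_boot.
Set Implicit Arguments. Unset Strict Implicit. Unset Printing Implicit Defensive.

Definition cnbhd (V : finType) (e : rel V) (v : V) : {set V} :=
  [set u | (u == v) || e v u].

Definition cnb_coloring (V : finType) (e : rel V) (k : nat) (c : V -> nat) : Prop :=
  (forall v, 1 <= c v <= k) /\
  (forall v i j, 1 <= i <= k -> 1 <= j <= k ->
     #|[set u in cnbhd e v | c u == i]| = #|[set u in cnbhd e v | c u == j]|).

(* Vertex set of G' : old vertices (inl a), the u's (inr (inl t), t : 'I_k,
   standing for u_(t+1)), the v's (inr (inr (inl t)), t : 'I_(k-1), standing
   for v_(t+1)) and the v''s (inr (inr (inr t)), standing for v'_(t+1)). *)
Definition addv_type (V : finType) (k : nat) : finType :=
  (V + ('I_k + ('I_k.-1 + 'I_k.-1)))%type.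

(* The listed (one-directional) adjacencies of the (3k-2)-vertex addition. *)
Definition addv_base (V : finType) (e : rel V) (k : nat) (z : V)
  (x y : addv_type V k) : bool :=
  match x, y with
  | inl a, inl b => e a b
  | inr (inl _), inl a => a == z                            (* u_i ~ z, 1<=i<=k *)
  | inr (inl s), inr (inl t) =>                             (* u_i ~ u_j, i<j<=k-1 *)
      (val s < val t) && (val t < k.-1)
  | inr (inr (inl _)), inr (inl t) => val t == k.-1         (* v_i ~ u_k *)
  | inr (inr (inr _)), inr (inl t) => val t == k.-1         (* v'_i ~ u_k *)
  | inr (inr (inl s)), inr (inr (inl t)) => val s < val t
  | inr (inr (inr s)), inr (inr (inr t)) => val s < val t
  | _, _ => false
  end.

Definition addv_edge (V : finType) (e : rel V) (k : nat) (z : V) :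
  rel (addv_type V k) :=
  fun x y => addv_base e z x y || addv_base e z y x.

Definition addv_color (V : finType) (k : nat) (c : V -> nat)
  (x : addv_type V k) : nat :=
  match x with
  | inl a => c a
  | inr (inl t) => (val t).+1
  | inr (inr (inl t)) => (val t).+1
  | inr (inr (inr t)) => (val t).+1
  end.

From mathcomp Require Import all_boot zify.

(* Only z gains neighbors among the old vertices, namely u_1, ..., u_k, one of
   each color.  The closed neighborhood of u_i (i < k) is {z, u_1, ..., u_(k-1)}
   and that of v_i (resp. v'_i) is {u_k, v_1, ..., v_(k-1)} (resp. with
   primes): one vertex of each color.  The closed neighborhood of u_k is
   {z, u_k} together with all the v_i and v'_i: two vertices of each color.
   Finally, the new vertices of color i < k are u_i, v_i and v'_i, and u_k is
   the only new vertex of color k. *)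

Lemma card_set_sum (A B : finType) (P : pred (A + B)) :
  #|[set x | P x]| = #|[set a | P (inl a)]| + #|[set b | P (inr b)]|.
Proof. by rewrite -!sum1dep_card big_sumType. Qed.

Lemma card_set_pred0 (T : finType) (P : pred T) :
  P =1 pred0 -> #|[set x | P x]| = 0.
Proof. by move=> P0; apply: eq_card0 => x; rewrite inE P0. Qed.

Lemma card_set_pred1 (T : finType) (P : pred T) (z : T) (b : bool) :
  (forall x, P x = (x == z) && b) -> #|[set x | P x]| = b.
Proof.
case: b => Pz; last by apply: card_set_pred0 => x; rewrite Pz andbF.
by apply: eq_card1 => x; rewrite inE Pz andbT.
Qed.

Lemma card_set_ord_val n (P : pred 'I_n) (q : pred nat) (m : nat) :
  (forall t : 'I_n, P t = q (val t) && (val t == m)) ->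
  #|[set t | P t]| = q m && (m < n).
Proof.
move=> Pq; have [lt_mn | le_nm] := ltnP m n.
  rewrite andbT; apply: (@card_set_pred1 _ _ (Ordinal lt_mn)) => t.
  by rewrite Pq -val_eqE /= andbC; case: eqP => // ->.
rewrite andbF; apply: card_set_pred0 => t; rewrite Pq; case: eqP => [val_t|]; last by rewrite andbF.
by move: le_nm; rewrite -val_t leqNgt ltn_ord.
Qed.

Lemma cnbhd_colorE (T : finType) (r : rel T) (f : T -> nat) v i :
  [set u in cnbhd r v | f u == i] = [set u | ((u == v) || r v u) && (f u == i)].
Proof. by apply/setP => u; rewrite !inE. Qed.

Section VertexAddition.

Variables (k : nat) (V : finType) (e : rel V) (c : V -> nat) (z : V).

Local Notation E' := (@addv_edge V e k z).
Local Notation c' := (@addv_color V k c).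

Lemma card_addv_color m :
  #|[set x | c' x == m.+1]| = #|[set a | c a == m.+1]| + (m < k) + (m < k.-1).*2.
Proof.
rewrite !card_set_sum /= !(@card_set_ord_val _ _ predT m) => [|t|t]; rewrite ?eqSS //.
by rewrite -addnn !addnA.
Qed.

Lemma card_addv_color_last : 0 < k ->
  #|[set x | c' x == k]| = #|[set a | c a == k]| + 1.
Proof.
move=> k_gt0; have := card_addv_color k.-1.
by rewrite ltnn prednK // leqnn addn0.
Qed.

Lemma card_addv_color_lt i : 1 <= i <= k.-1 ->
  #|[set x | c' x == i]| = #|[set a | c a == i]| + 3.
Proof.
case: i => // i /andP[_ lt_ik].
by rewrite card_addv_color lt_ik (leq_trans lt_ik (leq_pred k)) -addnA.
Qed.

Lemma addv_color_range : (forall a, 1 <= c a <= k) -> forall x, 1 <= c' x <= k.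
Proof.
move=> c_range [a|[t|[t|t]]] /=; first exact: c_range.
all: by have := ltn_ord t; lia.
Qed.

Hypothesis e_sym : symmetric e.
Hypothesis c_z : c z = k.

Lemma card_addv_cnbhd_old a m : m < k ->
  #|[set u in cnbhd E' (inl a) | c' u == m.+1]| =
  #|[set u in cnbhd e a | c u == m.+1]| + (a == z).
Proof.
move=> lt_mk; rewrite !cnbhd_colorE !card_set_sum /addv_edge /=.
rewrite (@card_set_ord_val _ _ (fun=> a == z) m) => [|t]; last by rewrite eqSS.
rewrite !cards0 lt_mk andbT !addn0; congr (_ + _).
by apply: eq_card => b; rewrite !inE (e_sym b) orbb.
Qed.

Lemma card_addv_cnbhd_u s m : m < k ->
  #|[set u in cnbhd E' (inr (inl s)) | c' u == m.+1]| = (val s == k.-1).+1.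
Proof.
move=> lt_mk; rewrite !cnbhd_colorE !card_set_sum /addv_edge /=.
rewrite (@card_set_pred1 _ _ z (c z == m.+1)) => [|b]; last first.
  by rewrite orbF; case: eqP => // ->.
rewrite (@card_set_ord_val _ _
  (fun j => [|| j == val s, (val s < j) && (j < k.-1) | (j < val s) && (val s < k.-1)]) m);
  last by move=> t; rewrite eqSS.
rewrite !(@card_set_ord_val _ _ (fun=> val s == k.-1) m) => [|t]; last by rewrite eqSS.
rewrite c_z lt_mk; case: s => s lt_sk /=; have [->|] := eqVneq s k.-1; lia.
Qed.

Lemma card_addv_cnbhd_v (y : 'I_k.-1 + 'I_k.-1) m : m < k ->
  #|[set u in cnbhd E' (inr (inr y)) | c' u == m.+1]| = 1.
Proof.
move=> lt_mk; rewrite !cnbhd_colorE !card_set_sum /addv_edge /=.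
case: y => s /=; rewrite !cards0.
all: rewrite (@card_set_ord_val _ _ (fun j => j == k.-1) m) => [|t]; last by rewrite orbF eqSS.
all: rewrite (@card_set_ord_val _ _ predT m) => [|t];
  last by rewrite -[_ == _ :> addv_type V k]/(val t == val s) eqSS; case: ltngtP.
all: by rewrite lt_mk /=; case: ltngtP lt_mk; lia.
Qed.

Lemma addv_cnb_coloring : cnb_coloring e k c -> cnb_coloring E' k c'.
Proof.
case=> c_range c_bal; split; first exact: addv_color_range.
move=> x [|i] [|j] //= lt_ik lt_jk.
case: x => [a|[s|y]].
- by rewrite !card_addv_cnbhd_old // (c_bal a i.+1 j.+1).
- by rewrite !card_addv_cnbhd_u.
- by rewrite !card_addv_cnbhd_v.
Qed.

End VertexAddition.

Theorem proposition2p13 (k : nat) (V : finType) (e : rel V) (c : V -> nat) (z : V) :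
  2 <= k ->
  symmetric e -> irreflexive e ->
  cnb_coloring e k c ->
  c z = k ->
  cnb_coloring (@addv_edge V e k z) k (@addv_color V k c) /\
  #|[set x : addv_type V k | @addv_color V k c x == k]| = #|[set a : V | c a == k]| + 1 /\
  (forall i, 1 <= i <= k.-1 ->
     #|[set x : addv_type V k | @addv_color V k c x == i]| = #|[set a : V | c a == i]| + 3).
Proof.
(* Loops are irrelevant: a closed neighborhood contains its center anyway. *)
move=> k_ge2 e_sym _ cnb_c c_z; split; first exact: addv_cnb_coloring.
split; first exact: card_addv_color_last (ltnW k_ge2).
exact: card_addv_color_lt.
Qed.
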